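(* Let $\Sigma=(\mathbb{N}_0,X,U,\mathscr{U},\phi)$ be a control system as in the standing setup and let $Q\subset X$ be a control set with $\operatorname{cl}\operatorname{Int}(Q)=\operatorname{cl}Q$. Then $Q$ is either mean equi-invariant or mean unstable.
   Context: Standing setup: $(X,d)$ is a metric space, $U$ is a compact metric space, and $F:X\times U\to X$ is a map such that $F_u:=F(\cdot,u)$ is continuous for every $u\in U$. Let $\mathscr U=U^{\mathbb N_0}$ with the product topology. For $\omega=(\omega_0,\omega_1,\dots)\in\mathscr U$, $x\in X$, set $\phi(0,x,\omega)=x$ and $\phi(k,x,\omega)=F_{\omega_{k-1}}\circ\cdots\circ F_{\omega_0}(x)$ for $k\ge1$. It is assumed that $\phi:\mathbb N_0\times X\times\mathscr U\to X$ is continuous. Notation: $B(x,\delta)$ is the open ball; $d(y,Q)=\inf_{q\in Q}d(y,q)$; $\operatorname{Int}$ and $\operatorname{cl}$ denote interior and closure in $X$. Control set: $D\subset X$ is a control set if (i) for every $x\in D$ there is $\omega\in\mathscr U$ with $\phi(k,x,\omega)\in D$ for all $k\in\mathbb N_0$; (ii) for every $x\in D$, $D\subset\operatorname{cl}\mathcal O^+(x)$, where $\mathcal O^+(x)=\{\phi(m,x,\omega):m\in\mathbb N_0,\omega\in\mathscr U\}$; (iii) $D$ is maximal with (i) and (ii). $x\in Q$ is a mean equi-invariant point of $Q$ if for every $\varepsilon>0$ there exist $\delta>0$ and $\omega\in\mathscr U$ such that $\limsup_{n\to\infty}\frac1n\sum_{i=0}^{n-1}d(\phi(i,y,\omega),Q)<\varepsilon$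 for all $y\in B(x,\delta)\cap Q$; $Q$ is mean equi-invariant if every point of $Q$ is such a point. $Q$ is mean unstable if there exists $\varepsilon>0$ such that for every $x\in Q$, every $\delta>0$ and every $\omega\in\mathscr U$ there exists $y\in B(x,\delta)\cap Q$ with $\limsup_{n\to\infty}\frac1n\sum_{i=0}^{n-1}d(\phi(i,y,\omega),Q)\ge\varepsilon$. *)

From HB Require Import structures.
From mathcomp Require Import all_boot all_order all_algebra.
From mathcomp Require Import all_classical all_reals all_analysis.
Set Implicit Arguments. Unset Strict Implicit. Unset Printing Implicit Defensive.
Import Order.TTheory GRing.Theory Num.Theory.
Local Open Scope classical_set_scope.
Local Open Scope ring_scope.

Section Defs.
Context {R : realType} {X U : metricType R}.

Definition ctrl := {ptws nat -> U}.

Fixpoint phi (F : X -> U -> X) (k : nat) (x : X) (w : ctrl) : X :=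
  match k with
  | 0 => x
  | k'.+1 => F (phi F k' x w) (w k')
  end.

Definition orbitp (F : X -> U -> X) (x : X) : set X :=
  [set y | exists m w, y = phi F m x w].

Definition ctrl_set_props (F : X -> U -> X) (D : set X) : Prop :=
  (forall x, D x -> exists w : ctrl, forall k, D (phi F k x w)) /\
  (forall x, D x -> D `<=` closure (orbitp F x)).

Definition control_set (F : X -> U -> X) (D : set X) : Prop :=
  ctrl_set_props F D /\
  (forall D', ctrl_set_props F D' -> D `<=` D' -> D' = D).

Definition dist_set (Q : set X) (y : X) : R := inf [set mdist y q | q in Q].

Definition mean_dev (F : X -> U -> X) (Q : set X) (y : X) (w : ctrl) : \bar R :=
  limn_esup (fun n : nat =>
    ((n%:R)^-1 * \sum_(i < n) dist_set Q (phi F i y w))%:E).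

Definition mean_equi_invariant_point (F : X -> U -> X) (Q : set X) (x : X) : Prop :=
  Q x /\
  forall eps : R, 0 < eps -> exists delta : R, 0 < delta /\ exists w : ctrl,
    forall y, mdist x y < delta -> Q y -> (mean_dev F Q y w < eps%:E)%E.

Definition mean_equi_invariant (F : X -> U -> X) (Q : set X) : Prop :=
  forall x, Q x -> mean_equi_invariant_point F Q x.

Definition mean_unstable (F : X -> U -> X) (Q : set X) : Prop :=
  exists eps : R, 0 < eps /\
    forall x, Q x -> forall delta : R, 0 < delta -> forall w : ctrl,
      exists y, mdist x y < delta /\ Q y /\ (eps%:E <= mean_dev F Q y w)%E.

End Defs.

From HB Require Import structures.
From mathcomp Require Import all_boot all_order all_algebra.
From mathcomp Require Import all_classical all_reals all_analysis.
From mathcomp Require Import lra zify.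
Import Order.TTheory GRing.Theory Num.Theory.
Local Open Scope classical_set_scope.
Local Open Scope ring_scope.

(* Suppose Q is not mean unstable and fix eps > 0.  Negating the definition
   gives one point x0 of Q, a radius d0 and a control w0 under which every
   point of Q near x0 has mean deviation (limsup of Cesaro averages of the
   distance to Q) below eps.  Since cl int Q = cl Q, some open ball B lies in
   Q and near x0.  Given any x in Q, approximate controllability inside the
   control set and continuity of phi(m, ., w1) give a control w1 and a time m
   steering a whole neighbourhood of x into B; concatenating w1 with w0 then
   works for that neighbourhood, because a limsup of Cesaro averages does not
   see a finite prefix. *)

Section CesaroLimsup.
Context {R : realType}.

Definition cesaro_limsup (a : nat -> R) : \bar R :=
  limn_esup (fun n : nat => ((n%:R)^-1 * \sum_(i < n) a i)%:E).

Lemma limn_esup_lt_eventually (u : nat -> \bar R) (e : R) :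
  (limn_esup u < e%:E)%E ->
  exists2 e' : R, e' < e & exists N, forall n, (N <= n)%N -> (u n <= e'%:E)%E.
Proof.
rewrite /limn_esup /limf_esup => /ereal_inf_lt [s [V [N _ VN] <-] lt_se].
have le_s n : (N <= n)%N -> (u n <= ereal_sup [set u k | k in V])%E.
  by move=> Nn; apply: ereal_sup_ubound; exists n => //; apply: VN.
move: le_s lt_se; case: (ereal_sup _) => [r| |] le_s lt_se //.
- by exists r; [rewrite -lte_fin | exists N].
- exists (e - 1); first by rewrite ltrBlDr ltrDl.
  by exists N => n Nn; apply: (le_trans (le_s n Nn)); rewrite leNye.
Qed.

Lemma limn_esup_le_eventually (u : nat -> \bar R) (c : R) (N : nat) :
  (forall n, (N <= n)%N -> (u n <= c%:E)%E) -> (limn_esup u <= c%:E)%E.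
Proof.
move=> le_u; rewrite /limn_esup /limf_esup.
apply: (@le_trans _ _ (ereal_sup [set u n | n in [set n | (N <= n)%N]])).
  by apply: ereal_inf_lbound; exists [set n | (N <= n)%N] => //; exists N.
by apply: ge_ereal_sup => _ [n Nn <-]; apply: le_u.
Qed.

Lemma sum_split (a : nat -> R) (m n : nat) : (m <= n)%N ->
  \sum_(i < n) a i = \sum_(i < m) a i + \sum_(i < n - m) a (i + m)%N.
Proof.
move=> le_mn; rewrite -!(big_mkord xpredT) (big_cat_nat (leq0n m) le_mn) /=.
congr (_ + _); rewrite -(big_mkord xpredT (fun i => a (i + m)%N)).
by rewrite -[in LHS](add0n m) big_addn.
Qed.

(* The prefix
   sum S is a constant, so S / n -> 0 and the tail average k/n * (avg of b)
   stays below any c in (e', eps). *)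
Lemma cesaro_limsup_delay (a b : nat -> R) (m : nat) (e : R) : 0 < e ->
  (forall i, a (i + m)%N = b i) ->
  (cesaro_limsup b < e%:E)%E -> (cesaro_limsup a < e%:E)%E.
Proof.
move=> e_gt0 a_delay /limn_esup_lt_eventually [e' lt_e'e [N le_b]].
set c := Num.max e' (e / 2).
have c_gt0 : 0 < c by rewrite lt_max; apply/orP; right; rewrite divr_gt0.
have lt_ce : c < e by rewrite gt_max lt_e'e /=; lra.
set S := \sum_(i < m) a i.
set K := Num.truncn (`|S| * 2 / (e - c)).
have S_small : `|S| * 2 < K.+1%:R * (e - c).
  rewrite -ltr_pdivrMr ?subr_gt0 //.
  have ge0 : 0 <= `|S| * 2 / (e - c) by apply: divr_ge0; [apply: mulr_ge0|lra].
  by case/andP: (truncn_itv ge0).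
apply: (@le_lt_trans _ _ ((c + (e - c) / 2)%:E)); last by rewrite lte_fin; lra.
apply: (@limn_esup_le_eventually _ _ (N + m + K + 1)%N) => n le_n.
have le_Nk : (N <= n - m)%N by lia.
have k_gt0 : (0 : R) < (n - m)%:R by rewrite ltr0n; lia.
have n_gt0 : (0 : R) < n%:R by rewrite ltr0n; lia.
rewrite lee_fin (@sum_split a m n); last by lia.
under [in X in _ + X]eq_bigr => i _ do rewrite a_delay.
move: (le_b _ le_Nk); rewrite lee_fin.
set k := (n - m)%N; set T := \sum_(i < k) b i => le_T.
have T_le : T <= k%:R * c.
  rewrite -ler_pdivrMl // mulrC.
  by apply: le_trans (_ : _ <= e') _; [rewrite mulrC | rewrite le_max lexx].
have kc_le : k%:R * c <= n%:R * c by rewrite ler_pM2r // ler_nat; lia.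
have Kn_le : K.+1%:R * (e - c) <= n%:R * (e - c).
  by rewrite ler_pM2r ?subr_gt0 // ler_nat; lia.
have S_le : S <= `|S| := ler_norm S.
rewrite -/S mulrC ler_pdivrMr //; nra.
Qed.

End CesaroLimsup.

Section Concatenation.
Context {R : realType} {X U : metricType R} {F : X -> U -> X}.

Definition concat_ctrl (w1 w : @ctrl R U) (m : nat) : @ctrl R U :=
  fun k => if (k < m)%N then w1 k else w (k - m)%N.

Lemma phi_concat_prefix (w1 w : @ctrl R U) (m k : nat) (y : X) : (k <= m)%N ->
  phi F k y (concat_ctrl w1 w m) = phi F k y w1.
Proof.
elim: k => [//|k IH] le_km /=; rewrite IH; last by lia.
by rewrite /concat_ctrl le_km.
Qed.

Lemma phi_concat_shift (w1 w : @ctrl R U) (m i : nat) (y : X) :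
  phi F (i + m) y (concat_ctrl w1 w m) = phi F i (phi F m y w1) w.
Proof.
elim: i => [|i IH]; first by rewrite add0n phi_concat_prefix.
rewrite addSn /= IH /concat_ctrl ifF ?addnK //; lia.
Qed.

Lemma mean_dev_cesaro (Q : set X) (y : X) (w : @ctrl R U) :
  mean_dev F Q y w = cesaro_limsup (fun i => dist_set Q (phi F i y w)).
Proof. by []. Qed.

Lemma mean_dev_concat (Q : set X) (w1 w : @ctrl R U) (m : nat) (y : X) (e : R) :
  0 < e -> (mean_dev F Q (phi F m y w1) w < e%:E)%E ->
  (mean_dev F Q y (concat_ctrl w1 w m) < e%:E)%E.
Proof.
move=> e_gt0; rewrite !mean_dev_cesaro; apply: (cesaro_limsup_delay _ _ m) => // i.
by rewrite phi_concat_shift.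
Qed.

Lemma phi_continuous_state (hF : forall u : U, continuous (fun x : X => F x u))
  (m : nat) (w : @ctrl R U) : continuous (fun x => phi F m x w).
Proof.
elim: m => [|m IH] x /=; first exact: cvg_id.
exact: (continuous_comp (IH x) (hF (w m) (phi F m x w))).
Qed.

End Concatenation.

Section MetricFacts.
Context {R : realType} {X : metricType R}.

Lemma nbhs_ball_mdist (c p : X) (r : R) : mdist c p < r -> nbhs p (ball c r).
Proof.
move=> lt_cp; apply/nbhs_ballP; exists ((r - mdist c p) / 2) => [/=|q pq].
  lra.
have cp : ball c ((mdist c p + r) / 2) p by rewrite ballEmdist /=; lra.
by have := ball_triangle cp pq; congr ball; lra.
Qed.

Lemma dense_interior_ball {Q : set X} {x0 : X} {d0 : R} :
  closure (interior Q) = closure Q -> Q x0 -> 0 < d0 ->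
  exists x1 r, [/\ Q x1, 0 < r & ball x1 r `<=` Q `&` ball x0 d0].
Proof.
move=> dense Qx0 d0_gt0.
have : closure (interior Q) x0 by rewrite dense; apply: subset_closure.
move=> /(_ _ (nbhsx_ballx x0 _ d0_gt0)) [x1 [int_x1 x0x1]].
have : nbhs x1 (Q `&` ball x0 d0).
  by apply: filterI => //; apply: nbhs_ball_mdist; move: x0x1; rewrite ballEmdist.
by move=> /nbhs_ballP [r r_gt0 sub]; exists x1, r; split => //; apply: interior_subset.
Qed.

End MetricFacts.

Lemma steer_neighbourhood {R : realType} {X U : metricType R} {F : X -> U -> X}
  (hF : forall u : U, continuous (fun x : X => F x u))
  {Q : set X} (hQ : ctrl_set_props F Q) {x x1 : X} {r : R} :
  Q x -> Q x1 -> 0 < r ->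
  exists m (w : @ctrl R U), exists2 d, 0 < d &
    forall y, mdist x y < d -> ball x1 r (phi F m y w).
Proof.
move=> Qx Qx1 r_gt0.
have [_ [[m [w ->]] x1z]] := hQ.2 x Qx x1 Qx1 _ (nbhsx_ballx x1 _ r_gt0).
have : nbhs x ((fun y => phi F m y w) @^-1` ball x1 r).
  apply: phi_continuous_state => //; apply: nbhs_ball_mdist.
  by move: x1z; rewrite ballEmdist.
move=> /nbhs_ballP [d d_gt0 sub]; exists m, w, d => // y xy.
by apply: sub; rewrite ballEmdist.
Qed.

Lemma not_mean_unstable_local {R : realType} {X U : metricType R}
  {F : X -> U -> X} {Q : set X} {e : R} :
  ~ mean_unstable F Q -> 0 < e ->
  exists x0, Q x0 /\ exists2 d0, 0 < d0 & exists w0 : @ctrl R U,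
    forall y, mdist x0 y < d0 -> Q y -> (mean_dev F Q y w0 < e%:E)%E.
Proof.
move=> not_unstable e_gt0; apply: contrapT => no_good; apply: not_unstable.
exists e; split => // x0 Qx0 d0 d0_gt0 w0; apply: contrapT => no_bad.
apply: no_good; exists x0; split => //; exists d0 => //; exists w0 => y x0y Qy.
rewrite ltNge; apply/negP => bad; apply: no_bad; by exists y.
Qed.

Theorem mainTheorem12 (R : realType) (X U : metricType R) (F : X -> U -> X)
  (hU : compact [set: U])
  (hF : forall u : U, continuous (fun x : X => F x u))
  (hphi : continuous (fun p : nat * X * @ctrl R U => phi F p.1.1 p.1.2 p.2))
  (Q : set X) (hQ : control_set F Q)
  (hint : closure (interior Q) = closure Q) :
  mean_equi_invariant F Q \/ mean_unstable F Q.
Proof.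
have [unstable|not_unstable] := pselect (mean_unstable F Q); [by right|left].
move=> x Qx; split => // e e_gt0.
have [x0 [Qx0 [d0 d0_gt0 [w0 good]]]] := not_mean_unstable_local not_unstable e_gt0.
have [x1 [r [Qx1 r_gt0 ball_in]]] := dense_interior_ball hint Qx0 d0_gt0.
have [m [w1 [d d_gt0 steer]]] := steer_neighbourhood hF hQ.1 Qx Qx1 r_gt0.
exists d; split => //; exists (concat_ctrl w1 w0 m) => y xy Qy.
apply: mean_dev_concat => //.
have [Qz x0z] := ball_in _ (steer y xy).
by apply: good => //; move: x0z; rewrite ballEmdist.
Qed.
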